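(* Let $G=(V,E)$ be a bipartite graph with probabilities $p_e\in(0,1]$, and let $x$ be a feasible solution of (LP-BIP). Let $\hat E\subseteq E$ be a random set, and write $\hat x_e=\mathbf 1[e\in\hat E]$. Assume $\hat E$ satisfies: - (marginals) $\Pr[\hat x_e=1]=x_e$ for every $e\in E$; - (negative correlation) for every $v\in V$, every $S\subseteq\delta(v)$ and every $b\in\{0,1\}$, $\Pr[\bigwedge_{e\in S}\hat x_e=b]\le\prod_{e\in S}\Pr[\hat x_e=b]$. Independently of $\hat E$, draw independent random variables $Y_e$ for $e\in E$, where $Y_e$ takes values in $[0,\frac{1}{p_e}\ln\frac1{1-p_e}]$ and $\Pr[Y_e\le y]=\frac{1}{p_e}(1-e^{-p_e y})$ on that interval (for $p_e=1$ the interval is $[0,\infty)$). Run the following process: - consider the edges of $\hat E$ in increasing order of $Y_e$; - when edge $e$ is considered, probe it if no edge of $\hat\delta(e):=\delta(e)\cap\hat E$ has already been added to the matching; - a probed edge exists independently with probability $p_e$, and if it exists it is added to the matching. Call $e\in\hat E$ safe if, at the moment $e$ is considered, no edge of $\hat\delta(e)$ is in the matching. Then for every edge $e$, $$\Pr[e\text{ is safe}\mid e\in\hat E]\ \ge\ g(p_e),$$ where $g$ is the function defined in the context below.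
   Context: (LP-BIP) is the linear program in variables $x_e$, $e\in E$: maximize $\sum_{e\in E}w_ep_ex_e$ subject to - $\sum_{e\in\delta(v)}p_ex_e\le 1$ for all $v\in V$; - $\sum_{e\in\delta(v)}x_e\le t_v$ for all $v\in V$; - $0\le x_e\le 1$ for all $e\in E$. Here $\delta(v)$ is the set of edges incident to $v$, and for an edge $e$, $\delta(e)$ is the set of edges other than $e$ sharing an endpoint with $e$. The function $g$ is defined by $g(p)=\frac{1}{2+p}\bigl(1-\exp(-\frac{2+p}{p}\ln\frac{1}{1-p})\bigr)$ for $p\in(0,1)$, and $g(1)=\frac13$ (the limit as $p\to1$). *)

From HB Require Import structures.
From mathcomp Require Import all_boot all_order all_algebra.
From mathcomp Require Import all_classical all_reals all_analysis.
Set Implicit Arguments. Unset Strict Implicit. Unset Printing Implicit Defensive.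
Import Order.TTheory GRing.Theory Num.Theory.
Local Open Scope classical_set_scope.
Local Open Scope ring_scope.

Definition g (R : realType) (p : R) : R :=
  if p == 1 then 3^-1
  else (2 + p)^-1 * (1 - expR (- ((2 + p) / p * ln (1 - p)^-1))).

Section Graph.
Variables (R : realType) (V E : finType) (eu ew : E -> V).

Definition delta_v (v : V) : {set E} := [set e | (eu e == v) || (ew e == v)].

Definition delta_e (e : E) : {set E} :=
  [set f | (f != e) &&
     [|| eu f == eu e, eu f == ew e, ew f == eu e | ew f == ew e]].

(* The process, given the realized random set F (= hat E), the values
   y_e (= Y_e) and the existence coins c_e. Edges of F are considered in
   increasing order of y (ties, which have probability 0, are broken by
   the enumeration order of E). *)
Definition ord_key (y : E -> R) (a b : E) : bool :=
  (y a < y b) || ((y a == y b) && (enum_rank a <= enum_rank b)%N).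

Definition consider_order (y : E -> R) (F : {set E}) : seq E :=
  sort (ord_key y) (enum F).

(* One step: edge e is probed iff no edge of delta(e) (intersected with F;
   the matching is always a subset of F) is in the matching M; a probed edge
   is added iff it exists (c e). *)
Definition step (c : E -> bool) (M : {set E}) (e : E) : {set E} :=
  if [disjoint delta_e e & M] && c e then e |: M else M.

Definition matching_before (F : {set E}) (y : E -> R) (c : E -> bool) (e : E)
  : {set E} :=
  let s := consider_order y F in foldl (step c) (finset.set0 : {set E}) (take (index e s) s).

Definition safe (F : {set E}) (y : E -> R) (c : E -> bool) (e : E) : bool :=
  (e \in F) && [disjoint delta_e e :&: F & matching_before F y c e].
End Graph.

From HB Require Import structures.
From mathcomp Require Import all_boot all_order all_algebra.
From mathcomp Require Import all_classical all_reals all_analysis.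
From mathcomp Require Import measurable_realfun ring lra.
Import Order.TTheory GRing.Theory Num.Theory.
Local Open Scope classical_set_scope.
Local Open Scope ring_scope.

(* Split the arrival time Y_e into the windows (k h, (k+1) h]
   of a grid of mesh h.  If Y_e lies in window k and every neighbour f of e
   in Ehat whose coin shows "exists" arrives after (k+1) h, then e is safe:
   only such neighbours could have entered the matching before e is
   considered.  Given Ehat = F, independence of the arrival times and of the
   coins makes this window event factor over the edges; each neighbour f
   contributes 1 - p_f Pr[Y_f <= b] >= exp(-p_f b), so the event has
   probability at least Pr[Y_e in the window] exp(-b s(F)), where s(F) is
   the total p-mass of the neighbours of e in F.  Averaging over F with the
   tangent line of exp at s = 2, and using E[s(Ehat); e in Ehat] <= 2 x_e
   (negative correlation at the common endpoint and the LP constraints at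
   both endpoints of e), gives
     Pr[e safe] >= x_e sum_k Pr[Y_e in window k] exp(-2 (k+1) h).
   This sum is geometric and dominates an explicit closed form which tends
   to g(p_e) as the mesh goes to 0 (for p_e < 1 the windows cover the
   support of Y_e; for p_e = 1 their number grows like 1/h^2). *)

Section SafetyCondition.
Variables (R : realType) (V E : finType) (eu ew : E -> V).

Lemma mem_foldl_step (c : E -> bool) (l : seq E) (M0 : {set E}) (f : E) :
  f \in foldl (step eu ew c) M0 l -> (f \in M0) || ((f \in l) && c f).
Proof.
elim: l M0 => [|a l IH] M0 /=; first by move=> ->.
move=> /IH /orP [fM|/andP[fl cf]]; last by rewrite inE fl cf !orbT.
move: fM; rewrite /step; case: ifP => [/andP[_ ca]|_]; last by move=> ->.
by rewrite !inE => /orP[/eqP ->|->//]; rewrite eqxx ca orbT.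
Qed.

Lemma ord_key_total (y : E -> R) : total (ord_key y).
Proof.
move=> a b; rewrite /ord_key; case: (ltgtP (y a) (y b)) => //= _.
by rewrite ?eqxx /= ?leq_total ?orbT.
Qed.

Lemma ord_key_trans (y : E -> R) : transitive (ord_key y).
Proof.
move=> b a c; rewrite /ord_key.
move=> /orP[ab|/andP[/eqP ab ab']] /orP[bc|/andP[/eqP bc bc']].
- by rewrite (lt_trans ab bc).
- by rewrite -bc ab.
- by rewrite ab bc.
- by rewrite ab bc eqxx (leq_trans ab' bc') orbT.
Qed.

Lemma ord_key_le (y : E -> R) (a b : E) : ord_key y a b -> y a <= y b.
Proof. by rewrite /ord_key => /orP[/ltW //|/andP[/eqP -> _]]. Qed.

Lemma safe_if_neighbours_late (F : {set E}) (y : E -> R) (c : E -> bool)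
    (e : E) :
  e \in F ->
  (forall f, f \in delta_e eu ew e -> f \in F -> c f -> y e < y f) ->
  safe eu ew F y c e.
Proof.
move=> eF late; rewrite /safe eF /= disjoint_subset.
apply/fintype.subsetP => f; rewrite inE => /andP[fe fF]; rewrite inE.
apply/negP => /mem_foldl_step; rewrite inE /= => /andP[f_early cf].
set s := consider_order y F in f_early.
have fs : f \in s by rewrite mem_sort mem_enum.
have es : e \in s by rewrite mem_sort mem_enum.
have s_sorted : sorted (ord_key y) s by apply/sort_sorted/ord_key_total.
rewrite in_take // in f_early.
have /ord_key_le yfe := sorted_ltn_index (@ord_key_trans y) s_sorted f e fs es f_early.
by have := lt_le_trans (late f fe fF cf) yfe; rewrite ltxx.
Qed.

End SafetyCondition.

Section Calculus.
Context {R : realType}.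
Implicit Types (q h y s a : R) (n : nat).

Definition arrival_cdf q y : R := q^-1 * (1 - expR (- (q * y))).

Definition support_end q : R := q^-1 * ln (1 - q)^-1.

(* The closed form of the discretised lower bound obtained with n windows
   of width h. *)
Definition riemann_bound q h n : R :=
  expR (- ((q + 2) * h)) * (1 - expR (- ((q + 2) * (n%:R * h)))) / (q + 2).

Lemma support_end_gt0 q : 0 < q < 1 -> 0 < support_end q.
Proof.
move=> /andP[q0 q1]; rewrite mulr_gt0 ?invr_gt0 // ln_gt0 //.
by rewrite invf_gt1 ?subr_gt0 // gtrDl oppr_lt0.
Qed.

Lemma expR_support_end q : 0 < q < 1 -> expR (- (q * support_end q)) = 1 - q.
Proof.
move=> /andP[q0 q1]; rewrite /support_end mulrA mulfV ?gt_eqF // mul1r.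
by rewrite lnV ?posrE ?subr_gt0 // opprK lnK // posrE subr_gt0.
Qed.

(* g is the value of the limit of the discretised bound for q < 1. *)
Lemma g_lt1E q : q < 1 ->
  g q = (2 + q)^-1 * (1 - expR (- ((q + 2) * support_end q))).
Proof.
move=> q1; rewrite /g (lt_eqF q1) /support_end.
by congr (_ * (1 - expR (- _))); rewrite mulrA addrC.
Qed.

Lemma expR_tangent y s a :
  expR (- (y * a)) * (1 - y * (s - a)) <= expR (- (y * s)).
Proof.
have -> : expR (- (y * s)) = expR (- (y * a)) * expR (- (y * (s - a))).
  by rewrite -expRD; congr expR; ring.
by apply: ler_wpM2l; [exact: expR_ge0 | rewrite -mulrN expR_ge1Dx].
Qed.

(* A single window: the term exp(-qh) (1 - exp(-(q+2)h)) / (q+2) of the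
   closed form is at most the arrival mass (1 - exp(-qh)) / q of a window of
   width h; both sides are compared with q h exp(-qh) by the tangent lines
   of exp. *)
Lemma window_term_le q h : 0 < q -> 0 < h ->
  expR (- (q * h)) * (1 - expR (- ((q + 2) * h))) / (q + 2) <=
  (1 - expR (- (q * h))) / q.
Proof.
move=> q0 h0; set u := expR (- (q * h)).
have u0 : 0 < u by rewrite expR_gt0.
have u_tangent : q * h * u <= 1 - u.
  have eu1 : expR (q * h) * u = 1 by rewrite /u -expRD addrN expR0.
  have : (1 + q * h) * u <= expR (q * h) * u.
    by apply: ler_wpM2r; [exact: ltW | exact: expR_ge1Dx].
  by rewrite eu1; lra.
have uv_tangent : 1 - expR (- ((q + 2) * h)) <= (q + 2) * h.
  by have := expR_ge1Dx (- ((q + 2) * h)); lra.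
rewrite ler_pdivrMr ?addr_gt0 // mulrAC ler_pdivlMr //.
have : u * (1 - expR (- ((q + 2) * h))) * q <= u * ((q + 2) * h) * q.
  by apply: ler_wpM2r; [exact: ltW | apply: ler_wpM2l => //; exact: ltW].
have : q * h * u * (q + 2) <= (1 - u) * (q + 2).
  by apply: ler_wpM2r => //; apply: ltW; rewrite addr_gt0.
nra.
Qed.

(* The discretised integral of exp(-2y) against the arrival distribution is
   a geometric sum, which dominates the closed form riemann_bound by a
   termwise comparison with window_term_le. *)
Lemma riemann_bound_le_sum q h n : 0 < q -> 0 < h ->
  riemann_bound q h n <=
  \sum_(k < n) (arrival_cdf q (k.+1%:R * h) - arrival_cdf q (k%:R * h))
               * expR (- (2 * (k.+1%:R * h))).
Proof.
move=> q0 h0; rewrite /riemann_bound /arrival_cdf.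
have window_le := window_term_le q h q0 h0.
set u := expR (- (q * h)) in window_le *; set v := expR (- (2 * h)).
have v0 : 0 < v by rewrite expR_gt0.
have powE (r : R) k : expR (- (r * (k%:R * h))) = expR (- (r * h)) ^+ k.
  by rewrite -expRM_natl; congr expR; ring.
have uvE : expR (- ((q + 2) * h)) = u * v by rewrite -expRD; congr expR; ring.
rewrite uvE in window_le.
have term_le k : ((u * v) ^+ k.+1 - (u * v) ^+ k.+2) / (q + 2) <=
    (q^-1 * (1 - u ^+ k.+1) - q^-1 * (1 - u ^+ k)) * v ^+ k.+1.
  have -> : ((u * v) ^+ k.+1 - (u * v) ^+ k.+2) / (q + 2) =
            u ^+ k * v ^+ k.+1 * (u * (1 - u * v) / (q + 2)).
    by rewrite !exprS !exprMn; field; rewrite gt_eqF ?addr_gt0.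
  have -> : (q^-1 * (1 - u ^+ k.+1) - q^-1 * (1 - u ^+ k)) * v ^+ k.+1 =
            u ^+ k * v ^+ k.+1 * ((1 - u) / q).
    by rewrite !exprS; field; rewrite gt_eqF.
  by apply: ler_wpM2l => //; rewrite mulr_ge0 // exprn_ge0 // ltW // expR_gt0.
under eq_bigr => k _ do rewrite !powE.
apply: le_trans (ler_sum _ (fun (k : 'I_n) _ => term_le k)).
rewrite -(big_mkord xpredT (fun k => ((u * v) ^+ k.+1 - (u * v) ^+ k.+2) / (q + 2))).
rewrite -mulr_suml (telescope_sumr_eq (fun k => - (u * v) ^+ k.+1)) //; last first.
  by move=> k _; ring.
rewrite powE uvE exprS expr1 le_eqVlt; apply/orP; left; apply/eqP.
by set w := (u * v) ^+ n; ring.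
Qed.

Lemma grid_window_unique h y (k j : nat) : 0 < h ->
  k%:R * h < y <= k.+1%:R * h -> j%:R * h < y <= j.+1%:R * h -> k = j.
Proof.
move=> h0 /andP[ky yk] /andP[jy yj].
have before (a b : nat) : (a < b)%N -> y <= a.+1%:R * h -> b%:R * h < y -> False.
  move=> ab ya hb; have : a.+1%:R * h <= b%:R * h.
    by apply: ler_wpM2r; [exact: ltW | rewrite ler_nat].
  by move=> /(le_trans ya) /(lt_le_trans hb); rewrite ltxx.
by case: (ltngtP k j) => // [kj|jk]; [case: (before _ _ kj yk jy) | case: (before _ _ jk yj ky)].
Qed.

Lemma le_of_le_sub_div (a b C : R) :
  (forall m : nat, a - C / m.+1%:R <= b) -> a <= b.
Proof.
move=> close; rewrite leNgt; apply/negP => ba.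
have ab0 : 0 < a - b by rewrite subr_gt0.
set m := Num.Def.truncn (`|C| / (a - b)).
have m_gt := truncnS_gt (`|C| / (a - b)); rewrite -/m in m_gt.
have m0 : 0 < m.+1%:R :> R by rewrite ltr0n.
have small : C / m.+1%:R < a - b.
  apply: le_lt_trans (_ : `|C| / m.+1%:R < a - b).
    by apply: ler_wpM2r; [rewrite invr_ge0 ltW | exact: ler_norm].
  by rewrite ltr_pdivrMr // mulrC -ltr_pdivrMr.
by have := close m; move: small; set z := C / _; lra.
Qed.

(* For q < 1, windows of width support_end q / n cover the support of the
   arrival time and the bounds converge to g q from below. *)
Lemma g_le_of_riemann_bounds_lt1 q r : 0 < q < 1 ->
  (forall n h, 0 < h -> n%:R * h <= support_end q -> riemann_bound q h n <= r) ->
  g q <= r.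
Proof.
move=> /andP[q0 q1] bounds; set L := support_end q.
have L0 : 0 < L by rewrite support_end_gt0 ?q0.
have gE := @g_lt1E q q1; rewrite -/L in gE.
have g0 : 0 <= g q.
  rewrite gE; apply: mulr_ge0; first by rewrite invr_ge0 addr_ge0 // ltW.
  rewrite subr_ge0 -expR0 ler_expR oppr_le0.
  by apply: mulr_ge0; [rewrite addr_ge0 // ltW | exact: ltW].
apply: (@le_of_le_sub_div _ _ (g q * ((q + 2) * L))) => m.
set n := m.+1; set h := L / n%:R.
have n0 : 0 < n%:R :> R by rewrite ltr0n.
have h0 : 0 < h by rewrite divr_gt0.
have nh : n%:R * h = L by rewrite mulrC -mulrA mulVf ?mulr1 // gt_eqF.
apply: le_trans (bounds n h h0 _); last by rewrite nh.
rewrite /riemann_bound nh.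
have -> : expR (- ((q + 2) * h)) * (1 - expR (- ((q + 2) * L))) / (q + 2) =
          expR (- ((q + 2) * h)) * g q.
  by rewrite gE (addrC 2 q); field; rewrite gt_eqF // addr_gt0.
have -> : g q * ((q + 2) * L) / n%:R = g q * ((q + 2) * h) by rewrite !mulrA.
have := expR_ge1Dx (- ((q + 2) * h)).
set E1 := expR _; set T := (q + 2) * h => E1_ge.
have : g q * (1 - T) <= g q * E1 by apply: ler_wpM2l.
by rewrite mulrBr mulr1 [E1 * _]mulrC.
Qed.

(* For q = 1 the support is unbounded: use n = M^2 windows of width 1/M. *)
Lemma g_le_of_riemann_bounds_eq1 r :
  (forall n h, 0 < h -> riemann_bound 1 h n <= r) -> g 1 <= r.
Proof.
move=> bounds; rewrite /g eqxx.
apply: (@le_of_le_sub_div _ _ (4 / 3)) => m.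
set M := m.+1%:R : R.
have M1 : 1 <= M by rewrite ler1n.
have M0 : 0 < M by lra.
have iM0 : 0 < M^-1 by rewrite invr_gt0.
apply: le_trans (bounds (m.+1 * m.+1)%N M^-1 iM0).
rewrite /riemann_bound (_ : 1 + 2 = 3 :> R) //.
rewrite (_ : (m.+1 * m.+1)%:R / M = M); last by rewrite natrM -/M mulfK // gt_eqF.
have E1_ge := expR_ge1Dx (- (3 / M)).
have E2_le : expR (- (3 * M)) <= M^-1.
  rewrite expRN lef_pV2 ?posrE ?expR_gt0 //.
  by have := expR_ge1Dx (3 * M); lra.
have E2_gt0 : 0 < expR (- (3 * M)) by rewrite expR_gt0.
have E1_gt0 : 0 < expR (- (3 / M)) by rewrite expR_gt0.
have iM1 : M^-1 <= 1 by rewrite invf_le1.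
rewrite (_ : 4 / 3 / M = 4 / 3 * M^-1) // (_ : 3 / M = 3 * M^-1) // in E1_ge E1_gt0 *.
move: E1_ge E1_gt0 E2_le E2_gt0 iM1 iM0.
set iv := M^-1; set E1 := expR _; set E2 := expR _ => E1_ge E1_gt0 E2_le E2_gt0 iM1 iv0.
have h1 : E1 * (1 - iv) <= E1 * (1 - E2) by apply: ler_wpM2l; lra.
have h2 : (1 - 3 * iv) * (1 - iv) <= E1 * (1 - iv) by apply: ler_wpM2r; lra.
have h3 : 1 - 4 * iv <= (1 - 3 * iv) * (1 - iv).
  have -> : (1 - 3 * iv) * (1 - iv) = 1 - 4 * iv + 3 * iv ^+ 2 by ring.
  by rewrite lerDl mulr_ge0 ?sqr_ge0.
have -> : 3^-1 - 4 / 3 * iv = (1 - 4 * iv) / 3 by field.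
by apply: ler_wpM2r (le_trans h3 (le_trans h2 h1)); rewrite invr_ge0.
Qed.

Lemma g_le_of_riemann_bounds q r : 0 < q <= 1 ->
  (forall n h, 0 < h -> (q < 1 -> n%:R * h <= support_end q) ->
     riemann_bound q h n <= r) ->
  g q <= r.
Proof.
move=> /andP[q0 q1] bounds; have [ql1|qge1] := ltP q 1.
  apply: (@g_le_of_riemann_bounds_lt1 q r); first by rewrite q0 ql1.
  by move=> n h h0 nh; apply: bounds.
have q_eq1 : q = 1 by apply/eqP; rewrite eq_le q1 qge1.
rewrite q_eq1 in bounds *; apply: g_le_of_riemann_bounds_eq1 => n h h0.
by apply: bounds => //; rewrite ltxx.
Qed.

End Calculus.

Section FiniteMeasurability.
Context {d : measure_display} {T : measurableType d}.

Lemma measurable_fin_forall (I : finType) (Q : I -> T -> Prop) :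
  (forall i, measurable [set w | Q i w]) -> measurable [set w | forall i, Q i w].
Proof.
move=> mQ; have -> : [set w | forall i, Q i w] = \bigcap_(i in [set: I]) [set w | Q i w].
  by apply/seteqP; split => w /= Qw i; [move=> _; apply: Qw | apply: Qw].
by apply: fin_bigcap_measurable => //; exact: finite_finset.
Qed.

Lemma measurable_fin_exists2 (I : finType) (Q : pred I) (A : I -> set T) :
  (forall i, measurable (A i)) -> measurable [set w | exists2 i, Q i & A i w].
Proof.
move=> mA; have -> : [set w | exists2 i, Q i & A i w] = \bigcup_(i in [set i | Q i]) A i.
  by apply/seteqP; split => w /= [i]; exists i.
by apply: fin_bigcup_measurable => //; exact: finite_finset.
Qed.

Lemma measurable_fiber_pred (I : finType) (theta : T -> I) (phi : pred I) :
  (forall i, measurable [set w | theta w = i]) -> measurable [set w | phi (theta w)].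
Proof.
move=> mfib.
have -> : [set w | phi (theta w)] = [set w | exists2 i, phi i & theta w = i].
  apply/seteqP; split => w /= => [phi_w|[i phi_i ->//]].
  by exists (theta w).
exact: measurable_fin_exists2.
Qed.

Lemma measurable_pair_fiber (I J : finType) (theta : T -> I) (eta : T -> J) :
  (forall i, measurable [set w | theta w = i]) ->
  (forall j, measurable [set w | eta w = j]) ->
  forall ij, measurable [set w | (theta w, eta w) = ij].
Proof.
move=> mtheta meta [i j].
have -> : [set w | (theta w, eta w) = (i, j)] =
          [set w | theta w = i] `&` [set w | eta w = j].
  by apply/seteqP; split => w /= => [[-> ->]|[-> ->]].
exact: measurableI.
Qed.

Lemma measurable_ffun_fiber (I J : finType) (theta : I -> T -> J) :
  (forall i j, measurable [set w | theta i w = j]) ->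
  forall K : {ffun I -> J}, measurable [set w | [ffun i => theta i w] = K].
Proof.
move=> mtheta K.
have -> : [set w | [ffun i => theta i w] = K] = [set w | forall i, theta i w = K i].
  apply/seteqP; split => w /= => [<- i|thetaK]; first by rewrite ffunE.
  by apply/ffunP => i; rewrite ffunE.
by apply: measurable_fin_forall => i; exact: mtheta.
Qed.

Lemma measurable_bool_fiber (b : T -> bool) (bt : bool) :
  measurable_fun setT b -> measurable [set w | b w = bt].
Proof.
move=> mb; have := mb measurableT [set bt] I; rewrite setTI.
by rewrite (_ : b @^-1` [set bt] = [set w | b w = bt]).
Qed.

End FiniteMeasurability.

Section FiniteProbability.
Context {R : realType} {d : measure_display} {Omega : measurableType d}.
Variable P : probability Omega R.

Definition pr (A : set Omega) : R := fine (P A).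

Lemma pr_ge0 (A : set Omega) : 0 <= pr A.
Proof. exact/fine_ge0/measure_ge0. Qed.

Lemma prE (A : set Omega) : measurable A -> P A = (pr A)%:E.
Proof. by move=> mA; rewrite /pr fineK // fin_num_measure. Qed.

Lemma pr_le (A B : set Omega) :
  measurable A -> measurable B -> A `<=` B -> pr A <= pr B.
Proof.
by move=> mA mB AB; rewrite -lee_fin -!prE //; apply: le_measure => //; rewrite inE.
Qed.

Lemma pr_le1 (A : set Omega) : measurable A -> pr A <= 1.
Proof. by move=> mA; rewrite -lee_fin -prE // probability_le1. Qed.

Lemma pr_setC (A : set Omega) : measurable A -> pr (~` A) = 1 - pr A.
Proof.
move=> mA; apply/eqP; rewrite -eqe -prE; last exact: measurableC.
by rewrite probability_setC // prE.
Qed.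

Lemma in_bigsetU_seq (I : eqType) (A : I -> set Omega) (s : seq I) (w : Omega) :
  (\big[setU/set0]_(i <- s) A i) w <-> exists2 i, i \in s & A i w.
Proof.
elim: s => [|a s IH]; first by rewrite big_nil; split => // -[].
rewrite big_cons; split.
  case=> [Aw|/IH [i iS Aiw]]; first by exists a; rewrite ?mem_head.
  by exists i; rewrite // in_cons iS orbT.
move=> [i]; rewrite in_cons => /orP[/eqP ->|iS Aiw]; first by left.
by right; apply/IH; exists i.
Qed.

Lemma pr_bigsetU_seq (I : eqType) (A : I -> set Omega) (s : seq I) :
  uniq s -> (forall i, measurable (A i)) ->
  (forall i j w, A i w -> A j w -> i = j) ->
  pr (\big[setU/set0]_(i <- s) A i) = \sum_(i <- s) pr (A i).
Proof.
move=> s_uniq mA disjA; elim: s s_uniq => [|a s IH] /=.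
  by rewrite !big_nil /pr measure0.
move=> /andP[aS s_uniq]; rewrite !big_cons -IH //.
have mB : measurable (\big[setU/set0]_(i <- s) A i) by apply: bigsetU_measurable.
apply/eqP; rewrite -eqe EFinD -!prE //; last exact: measurableU.
rewrite measureU //; apply/seteqP; split => // w [Aaw] /in_bigsetU_seq [j js Ajw].
by move: aS; rewrite (disjA _ _ _ Aaw Ajw) js.
Qed.

Lemma pr_partition (I : finType) (Q : pred I) (A : I -> set Omega) (B : set Omega) :
  (forall i, measurable (A i)) ->
  (forall i j w, A i w -> A j w -> i = j) ->
  (forall w, B w <-> exists2 i, Q i & A i w) ->
  pr B = \sum_(i | Q i) pr (A i).
Proof.
move=> mA disjA BA.
have -> : B = \big[setU/set0]_(i <- [seq i <- enum I | Q i]) A i.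
  apply/seteqP; split => w.
    move=> /BA [i Qi Aiw]; apply/in_bigsetU_seq; exists i => //.
    by rewrite mem_filter Qi mem_enum.
  by move=> /in_bigsetU_seq [i]; rewrite mem_filter => /andP[Qi _] Aiw; apply/BA; exists i.
by rewrite pr_bigsetU_seq ?(filter_uniq _ (enum_uniq I)) // bigop.big_filter big_enum_cond.
Qed.

Lemma sum_pr_fibers (I : finType) (theta : Omega -> I) (Q : pred I) :
  (forall i, measurable [set w | theta w = i]) ->
  \sum_(i | Q i) pr [set w | theta w = i] = pr [set w | Q (theta w)].
Proof.
move=> mfib; symmetry; apply: pr_partition => //.
  by move=> i j w /= -> .
move=> w /=; split => [Qw|[i Qi -> //]].
by exists (theta w).
Qed.

End FiniteProbability.

Section Process.
Context {R : realType} {V E : finType} {eu ew : E -> V} {p x : E -> R}.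
Context {d : measure_display} {Omega : measurableType d} {P : probability Omega R}.
Context {Ehat : Omega -> {set E}} {Y : E -> Omega -> R} {c : E -> Omega -> bool}.
Hypothesis Hp : forall f, 0 < p f <= 1.
Hypothesis Hx1 : forall v, \sum_(f in delta_v eu ew v) p f * x f <= 1.
Hypothesis Hx3 : forall f, 0 <= x f <= 1.
Hypothesis HEm : forall F : {set E}, measurable [set w | Ehat w = F].
Hypothesis HYm : forall f, measurable_fun setT (Y f).
Hypothesis Hcm : forall f b, measurable [set w | c f w = b].
Hypothesis Hmarg : forall f, P [set w | f \in Ehat w] = (x f)%:E.
Hypothesis Hnc : forall (v : V) (S : {set E}) (b : bool),
  S \subset delta_v eu ew v ->
  fine (P [set w | forall f, f \in S -> (f \in Ehat w) = b])
    <= \prod_(f in S) fine (P [set w | (f \in Ehat w) = b]).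
Hypothesis HYdist : forall f (y : R), 0 <= y ->
  (p f < 1 -> y <= (p f)^-1 * ln (1 - p f)^-1) ->
  P [set w | Y f w <= y] = ((p f)^-1 * (1 - expR (- (p f * y))))%:E.
Hypothesis Hc : forall f, P [set w | c f w = true] = (p f)%:E.
Hypothesis Hindep : forall (F : {set E}) (B : E -> set R) (b : E -> bool),
  (forall f, measurable (B f)) ->
  P [set w | Ehat w = F /\ (forall f, B f (Y f w)) /\ (forall f, c f w = b f)]
  = (fine (P [set w | Ehat w = F])
     * \prod_f fine (P [set w | B f (Y f w)])
     * \prod_f fine (P [set w | c f w = b f]))%:E.

Local Notation pr := (pr P).

Lemma p_ge0 f : 0 <= p f. Proof. by case/andP: (Hp f) => /ltW. Qed.
Lemma x_ge0 f : 0 <= x f. Proof. by case/andP: (Hx3 f). Qed.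

Lemma pr_coin_true f : pr [set w | c f w = true] = p f.
Proof. by rewrite /pr Hc. Qed.

Lemma pr_coin_false f : pr [set w | c f w = false] = 1 - p f.
Proof.
have -> : [set w | c f w = false] = ~` [set w | c f w = true].
  by apply/seteqP; split => w /=; case: (c f w).
by rewrite pr_setC // pr_coin_true.
Qed.

Lemma measurable_Y_itv f (i : interval R) : measurable [set w | Y f w \in i].
Proof. by have := HYm f measurableT _ (measurable_itv i); rewrite setTI. Qed.

Lemma measurable_Y_le f y : measurable [set w | Y f w <= y].
Proof.
have -> : [set w | Y f w <= y] = [set w | Y f w \in `]-oo, y]].
  by apply/seteqP; split => w /=; rewrite in_itv.
exact: measurable_Y_itv.
Qed.

Lemma pr_True : pr [set _ | True] = 1.
Proof. exact: (congr1 fine (probability_setT P)). Qed.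

Lemma pr_Y_window f a b : a <= b ->
  pr [set w | Y f w \in `]a, b]] = pr [set w | Y f w <= b] - pr [set w | Y f w <= a].
Proof.
move=> ab; have mW := measurable_Y_itv f `]a, b].
have -> : [set w | Y f w <= b] = [set w | Y f w \in `]a, b]] `|` [set w | Y f w <= a].
  apply/seteqP; split => w /=; rewrite in_itv /=.
    by case: (ltP a (Y f w)) => aY /= Yb; [left | right].
  by case=> [/andP[_ ->] //|Ya]; apply: le_trans Ya ab.
have disj : [set w | Y f w \in `]a, b]] `&` [set w | Y f w <= a] = set0.
  apply/seteqP; split => w //= []; rewrite in_itv /= => /andP[aY _] Ya.
  by have := lt_le_trans aY Ya; rewrite ltxx.
have mL := measurable_Y_le f a.
by rewrite /pr measureU // fineD ?fin_num_measure // addrK.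
Qed.

Lemma pr_Y_gt f b : pr [set w | Y f w \in `]b, +oo[] = 1 - pr [set w | Y f w <= b].
Proof.
rewrite -pr_setC; last exact: measurable_Y_le.
congr pr; apply/seteqP; split => w /=; rewrite in_itv /= andbT.
  by move=> bY Yb; have := lt_le_trans bY Yb; rewrite ltxx.
by move/negP; rewrite -ltNge.
Qed.

Lemma pr_Y_le f y : 0 <= y -> (p f < 1 -> y <= support_end (p f)) ->
  pr [set w | Y f w <= y] = arrival_cdf (p f) y.
Proof. by move=> y0 y_supp; rewrite /pr HYdist. Qed.

Lemma pr_Y_grid_window f n h (k : 'I_n) : 0 < h ->
  (p f < 1 -> n%:R * h <= support_end (p f)) ->
  pr [set w | Y f w \in `]k%:R * h, k.+1%:R * h]] =
  arrival_cdf (p f) (k.+1%:R * h) - arrival_cdf (p f) (k%:R * h).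
Proof.
move=> h0 nh_supp.
have supp m : (m <= n)%N -> p f < 1 -> m%:R * h <= support_end (p f).
  by move=> mn /nh_supp; apply: le_trans; rewrite ler_pM2r // ler_nat.
have mh_ge0 m : 0 <= m%:R * h by rewrite mulr_ge0 // ltW.
rewrite pr_Y_window; last by rewrite ler_pM2r // ler_nat.
rewrite (pr_Y_le f _ (mh_ge0 k.+1) (supp _ (ltn_ord k))).
by rewrite (pr_Y_le f _ (mh_ge0 k) (supp _ (ltnW (ltn_ord k)))).
Qed.

(* The probability that f is absent or arrives after b is at least
   exp(-p_f b); beyond the support it is 1 - p_f >= exp(-p_f b). *)
Lemma absent_or_late_ge f b : 0 <= b ->
  expR (- (p f * b)) <= 1 - p f * pr [set w | Y f w <= b].
Proof.
move=> b0; have /andP[pf0 pf1] := Hp f.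
have [/andP[pf_lt1 b_beyond]|] := boolP ((p f < 1) && (support_end (p f) < b)).
  have : pr [set w | Y f w <= b] <= 1 by apply/pr_le1/measurable_Y_le.
  have : expR (- (p f * b)) <= 1 - p f.
    rewrite -expR_support_end ?pf0 // ler_expR lerN2.
    by apply: ler_wpM2l; apply: ltW.
  nra.
rewrite negb_and -!leNgt => b_in.
rewrite pr_Y_le //; last by move=> pf_lt1; case/orP: b_in => //; rewrite leNgt pf_lt1.
by rewrite /arrival_cdf mulrA mulfV ?gt_eqF // mul1r opprB addrCA subrr addr0.
Qed.

Variable e : E.

Local Notation nbrs F := (delta_e eu ew e :&: F).

Definition neighbour_mass (F : {set E}) : R := \sum_(f in nbrs F) p f.

Definition window_constraint (F : {set E}) (a b : R) (f : E) (cf : bool) : set R :=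
  if f == e then [set r | r \in `]a, b]]
  else if (f \in nbrs F) && cf then [set r | r \in `]b, +oo[] else setT.

Definition window_event (F : {set E}) (a b : R) : set Omega :=
  [set w | Ehat w = F /\ forall f, window_constraint F a b f (c f w) (Y f w)].

Definition coin_window_event (F : {set E}) (a b : R) (cv : {ffun E -> bool}) :=
  [set w | Ehat w = F /\ (forall f, window_constraint F a b f (cv f) (Y f w)) /\
     (forall f, c f w = cv f)].

Lemma e_notin_nbrs F : e \notin nbrs F.
Proof. by rewrite !inE eqxx. Qed.

Lemma measurable_window_constraint F a b f cf :
  measurable (window_constraint F a b f cf).
Proof.
rewrite /window_constraint; case: ifP => _; first exact: measurable_itv.
by case: ifP => _; [exact: measurable_itv | exact: measurableT].
Qed.

Lemma measurable_coin_window_event F a b cv :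
  measurable (coin_window_event F a b cv).
Proof.
apply: measurableI; first exact: HEm.
apply: measurableI; apply: measurable_fin_forall => f; last exact: Hcm.
rewrite /window_constraint; case: ifP => _; first exact: measurable_Y_itv.
case: ifP => _; first exact: measurable_Y_itv.
by rewrite (_ : [set w | _] = setT) //; apply/seteqP; split.
Qed.

Lemma window_event_coins F a b w :
  window_event F a b w <-> exists2 cv, predT cv & coin_window_event F a b cv w.
Proof.
split => [[EF Bw]|[cv _ [EF [Bw cw]]]].
  by exists [ffun f => c f w] => //; split => //; split => f; rewrite ffunE.
by split => // f; rewrite cw.
Qed.

Lemma measurable_window_event F a b : measurable (window_event F a b).
Proof.
rewrite (_ : window_event F a b = [set w | exists2 cv, predT cv & coin_window_event F a b cv w]).
  by apply: measurable_fin_exists2 => cv; exact: measurable_coin_window_event.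
by apply/seteqP; split => w /window_event_coins.
Qed.

(* By independence, the window event factorizes over the edges. *)
Lemma pr_window_event F a b : pr (window_event F a b) =
  pr [set w | Ehat w = F] * \prod_f \sum_(cf : bool)
     pr [set w | window_constraint F a b f cf (Y f w)] * pr [set w | c f w = cf].
Proof.
rewrite (@pr_partition _ _ _ P _ predT (coin_window_event F a b)); first last.
- exact: window_event_coins.
- move=> cv cv' w [_ [_ cvw]] [_ [_ cv'w]]; apply/ffunP => f.
  by rewrite -cvw -cv'w.
- exact: measurable_coin_window_event.
rewrite (eq_bigr (fun cv : {ffun E -> bool} => pr [set w | Ehat w = F] *
    \prod_f pr [set w | window_constraint F a b f (cv f) (Y f w)] *
    \prod_f pr [set w | c f w = cv f])); last first.
  by move=> cv _; rewrite /pr /coin_window_event (Hindep F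
    (fun f => window_constraint F a b f (cv f)) cv
    (fun f => measurable_window_constraint F a b f (cv f))).
rewrite (bigA_distr_bigA (fun f cf => pr [set w | window_constraint F a b f cf (Y f w)]
                                   * pr [set w | c f w = cf])) /= mulr_sumr.
by apply: eq_bigr => cv _; rewrite -mulrA -big_split.
Qed.

(* Lower bound for the window event: each existing neighbour is late with
   probability at least exp(-p_f b), so the product is at least
   Pr[Y_e in (a, b]] exp(-b s(F)). *)
Lemma pr_window_event_ge F a b : 0 <= a <= b ->
  pr [set w | Ehat w = F] *
    (pr [set w | Y e w \in `]a, b]] * expR (- (b * neighbour_mass F)))
  <= pr (window_event F a b).
Proof.
move=> /andP[a0 ab]; have b0 : 0 <= b := le_trans a0 ab.
rewrite pr_window_event; apply: ler_wpM2l; first exact: pr_ge0.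
pose lb f := if f == e then pr [set w | Y e w \in `]a, b]]
             else if f \in nbrs F then expR (- (p f * b)) else 1.
have -> : pr [set w | Y e w \in `]a, b]] * expR (- (b * neighbour_mass F)) =
          \prod_f lb f.
  rewrite (bigD1 e) //= /lb eqxx; congr (_ * _).
  rewrite /neighbour_mass mulr_sumr -sumrN expR_sum big_mkcond [RHS]big_mkcond /=.
  apply: eq_bigr => f _; case: (eqVneq f e) => [->|fe].
    by rewrite (negbTE (e_notin_nbrs F)).
  by rewrite /= mulrC.
apply: ler_prod => f _; apply/andP; split.
  rewrite /lb; case: ifP => _; first exact: pr_ge0.
  by case: ifP => _ //; rewrite expR_ge0.
rewrite big_bool /= pr_coin_true pr_coin_false /lb /window_constraint.
case: (eqVneq f e) => [->|fe] /=; first by rewrite -mulrDr addrC subrK mulr1.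
have [f_nbr|f_nbr] /= := boolP (f \in nbrs F); last first.
  by rewrite !pr_True !mul1r addrC subrK.
rewrite pr_Y_gt pr_True mul1r.
by have := absent_or_late_ge f b b0; lra.
Qed.

(* On the window event e is safe: the existing neighbours arrive after b,
   and e arrives before b. *)
Lemma window_event_safe (F : {set E}) (a b : R) (w : Omega) :
  e \in F -> window_event F a b w ->
  safe eu ew (Ehat w) (fun f => Y f w) (fun f => c f w) e.
Proof.
move=> eF [EF Bw]; apply: safe_if_neighbours_late; first by rewrite EF.
move=> f fe fF cf; have := Bw e; rewrite /window_constraint eqxx /= in_itv /=.
move=> /andP[_ Yeb]; apply: le_lt_trans Yeb _.
have := Bw f; rewrite /window_constraint.
have -> : (f == e) = false by apply/eqP => fe'; rewrite fe' !inE eqxx in fe.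
by rewrite inE fe -EF fF cf /= in_itv /= andbT.
Qed.

Lemma grid_window_events_disjoint n h (i j : {set E} * 'I_n) w : 0 < h ->
  window_event i.1 (i.2%:R * h) (i.2.+1%:R * h) w ->
  window_event j.1 (j.2%:R * h) (j.2.+1%:R * h) w -> i = j.
Proof.
case: i j => [F k] [G j] h0 /= [EF Bk] [EG Bj]; move: (Bk e) (Bj e).
rewrite /window_constraint eqxx /= !in_itv /= => Ik Ij.
have -> : F = G by rewrite -EF -EG.
by congr pair; apply: val_inj; exact: (grid_window_unique _ _ _ _ h0 Ik Ij).
Qed.

Lemma delta_e_common_endpoint f : f \in delta_e eu ew e ->
  exists v, e \in delta_v eu ew v /\ f \in delta_v eu ew v.
Proof.
rewrite !inE => /andP[_ /or4P[]] /eqP fe;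
  [exists (eu e) | exists (ew e) | exists (eu e) | exists (ew e)];
  by rewrite !inE fe !eqxx ?orbT.
Qed.

(* Negative correlation at the common endpoint bounds the probability that
   e and a neighbour f are both in Ehat. *)
Lemma pr_both_in_le f : f \in delta_e eu ew e ->
  pr [set w | (e \in Ehat w) && (f \in Ehat w)] <= x e * x f.
Proof.
move=> fe; have [v [ev fv]] := delta_e_common_endpoint f fe.
have f_neq_e : f != e by move: fe; rewrite !inE => /andP[].
have ef_sub : [set e; f]%SET \subset delta_v eu ew v.
  by apply/fintype.subsetP => g; rewrite in_set2 => /orP[] /eqP ->.
have := Hnc v [set e; f]%SET true ef_sub; rewrite big_setU1 ?inE 1?eq_sym // big_set1.
rewrite !Hmarg /=; congr (fine (P _) <= _); apply/seteqP; split => w /=.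
  by move=> both; rewrite (both e) ?(both f) // !inE eqxx ?orbT.
by move=> /andP[eE fE] g; rewrite !inE => /orP[] /eqP ->.
Qed.

(* The LP constraints at the two endpoints of e. *)
Lemma sum_delta_e_le2 : \sum_(f in delta_e eu ew e) p f * x f <= 2.
Proof.
apply: (@le_trans _ _ (\sum_(f in delta_v eu ew (eu e)) p f * x f +
                       \sum_(f in delta_v eu ew (ew e)) p f * x f)); last first.
  by have := Hx1 (eu e); have := Hx1 (ew e); lra.
rewrite big_mkcond [X in _ <= X + _]big_mkcond [X in _ <= _ + X]big_mkcond.
rewrite -big_split /=; apply: ler_sum => f _.
have px0 : 0 <= p f * x f by rewrite mulr_ge0 ?p_ge0 ?x_ge0.
case: ifP => fe; last by rewrite addr_ge0 //; case: ifP.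
move: fe; rewrite !inE => /andP[_ /or4P[]] /eqP fe; rewrite fe !eqxx ?orbT /=;
  case: ifP => _; lra.
Qed.

Lemma sum_pr_e_in : \sum_(F : {set E} | e \in F) pr [set w | Ehat w = F] = x e.
Proof. by rewrite (@sum_pr_fibers _ _ _ P _ Ehat (fun F => e \in F) HEm) /pr Hmarg. Qed.

Lemma expected_neighbour_mass_le :
  \sum_(F : {set E} | e \in F) pr [set w | Ehat w = F] * neighbour_mass F <= 2 * x e.
Proof.
have -> : \sum_(F : {set E} | e \in F) pr [set w | Ehat w = F] * neighbour_mass F =
    \sum_(f in delta_e eu ew e) p f *
      pr [set w | (e \in Ehat w) && (f \in Ehat w)].
  rewrite (eq_bigr (fun F : {set E} => \sum_(f in delta_e eu ew e)
             (if f \in F then p f * pr [set w | Ehat w = F] else 0))); last first.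
    move=> F _; rewrite /neighbour_mass mulr_sumr.
    rewrite (eq_bigl (fun f => (f \in delta_e eu ew e) && (f \in F))); last first.
      by move=> f; rewrite inE.
    by rewrite big_mkcondr /=; apply: eq_bigr => f _; case: ifP; rewrite // mulrC.
  rewrite exchange_big /=; apply: eq_bigr => f _.
  rewrite -(@sum_pr_fibers _ _ _ P _ Ehat (fun F => (e \in F) && (f \in F)) HEm).
  by rewrite mulr_sumr big_mkcondr /=; apply: eq_bigr => F _; case: ifP.
apply: (@le_trans _ _ (\sum_(f in delta_e eu ew e) p f * (x e * x f))).
  by apply: ler_sum => f fe; apply: ler_wpM2l; [exact: p_ge0 | exact: pr_both_in_le].
under eq_bigr => f _ do rewrite mulrCA.
by rewrite -mulr_sumr mulrC; apply: ler_wpM2r; [exact: x_ge0 | exact: sum_delta_e_le2].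
Qed.

(* Jensen-type step: by convexity of exp (tangent line at s = 2),
   E[exp(-y s(Ehat)); e in Ehat] >= exp(-2y) x_e. *)
Lemma expected_exp_neighbour_mass_ge y : 0 <= y ->
  expR (- (2 * y)) * x e <= \sum_(F : {set E} | e \in F)
     pr [set w | Ehat w = F] * expR (- (y * neighbour_mass F)).
Proof.
move=> y0; set K := expR (- (2 * y)).
apply: (@le_trans _ _ (\sum_(F : {set E} | e \in F)
  pr [set w | Ehat w = F] * (K * (1 - y * (neighbour_mass F - 2))))); last first.
  apply: ler_sum => F _; apply: ler_wpM2l; first exact: pr_ge0.
  by rewrite /K (mulrC 2 y); exact: expR_tangent.
have -> : \sum_(F : {set E} | e \in F)
    pr [set w | Ehat w = F] * (K * (1 - y * (neighbour_mass F - 2))) =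
  K * ((1 + 2 * y) * \sum_(F : {set E} | e \in F) pr [set w | Ehat w = F]
       - y * \sum_(F : {set E} | e \in F) pr [set w | Ehat w = F] * neighbour_mass F).
  rewrite !mulr_sumr -sumrB mulr_sumr; apply: eq_bigr => F _; ring.
rewrite sum_pr_e_in; apply: ler_wpM2l; first exact: expR_ge0.
have := ler_wpM2l y0 expected_neighbour_mass_le.
by move: (\sum_(F | _) _) => S2; lra.
Qed.

(* safe, expressed through the finite data it depends on: the realized set,
   the order relation between arrival times, and the coins. *)
Definition safe_by_order (F : {set E}) (K : {ffun E * E -> bool})
    (cv : {ffun E -> bool}) : bool :=
  let s := sort (fun a b => K (a, b)) (enum F) in
  (e \in F) && [disjoint delta_e eu ew e :&: F &
     foldl (step eu ew cv) (finset.set0 : {set E}) (take (index e s) s)].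

Lemma safe_by_orderE (F : {set E}) (y : E -> R) (cf : E -> bool) :
  safe eu ew F y cf e =
  safe_by_order F [ffun ab => ord_key y ab.1 ab.2] [ffun f => cf f].
Proof.
rewrite /safe /safe_by_order /matching_before /consider_order.
have -> : (fun a b => [ffun ab => ord_key y ab.1 ab.2] (a, b)) = ord_key y.
  by apply: boolp.funext => a; apply: boolp.funext => b; rewrite ffunE.
by have -> : ([ffun f => cf f] : E -> bool) = cf by apply: boolp.funext => f; rewrite ffunE.
Qed.

Lemma measurable_ord_key a b bt :
  measurable [set w | ord_key (fun f => Y f w) a b = bt].
Proof.
apply: measurable_bool_fiber; apply: measurable_or; first exact: measurable_fun_ltr.
by apply: measurable_and => //; exact: measurable_fun_eqr.
Qed.

Lemma measurable_safe :
  measurable [set w | safe eu ew (Ehat w) (fun f => Y f w) (fun f => c f w) e].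
Proof.
have -> : [set w | safe eu ew (Ehat w) (fun f => Y f w) (fun f => c f w) e] =
    [set w | safe_by_order (Ehat w) [ffun ab => ord_key (fun f => Y f w) ab.1 ab.2]
                                    [ffun f => c f w]].
  by apply/seteqP; split => w /=; rewrite safe_by_orderE.
pose theta w := (Ehat w,
  [ffun ab : E * E => ord_key (fun f => Y f w) ab.1 ab.2], [ffun f => c f w]).
apply: (@measurable_fiber_pred _ Omega _ theta (fun t => safe_by_order t.1.1 t.1.2 t.2)).
apply: measurable_pair_fiber; last exact: measurable_ffun_fiber.
apply: measurable_pair_fiber => //; apply: measurable_ffun_fiber => ab bt.
exact: measurable_ord_key.
Qed.

(* The main estimate: summing the window events over a grid of mesh h
   covering [0, n h] and over the realizations F of Ehat containing e. *)
Lemma pr_safe_ge (n : nat) (h : R) : 0 < h ->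
  (p e < 1 -> n%:R * h <= support_end (p e)) ->
  x e * \sum_(k < n) (arrival_cdf (p e) (k.+1%:R * h) - arrival_cdf (p e) (k%:R * h))
                     * expR (- (2 * (k.+1%:R * h)))
  <= pr [set w | safe eu ew (Ehat w) (fun f => Y f w) (fun f => c f w) e].
Proof.
move=> h0 nh_supp.
pose W (i : {set E} * 'I_n) := window_event i.1 (i.2%:R * h) (i.2.+1%:R * h).
pose D (k : 'I_n) := pr [set w | Y e w \in `]k%:R * h, k.+1%:R * h]].
have mW i : measurable (W i) by exact: measurable_window_event.
have mWe : measurable [set w | exists2 i : {set E} * 'I_n, e \in i.1 & W i w].
  exact: measurable_fin_exists2.
apply: le_trans (@pr_le _ _ _ P _ _ mWe measurable_safe _); last first.
  by move=> w [[F k] /= eF Ww]; exact: (window_event_safe _ _ _ _ eF Ww).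
rewrite (@pr_partition _ _ _ P _ (fun i : {set E} * 'I_n => e \in i.1) W) //; last first.
  by move=> i j w; exact: grid_window_events_disjoint.
have -> : \sum_(i : {set E} * 'I_n | e \in i.1) pr (W i) =
    \sum_(F : {set E} | e \in F) \sum_(k < n) pr (W (F, k)).
  by rewrite pair_big_dep; apply: eq_big => [[F k]|[F k] _] //=; rewrite andbT.
apply: (@le_trans _ _ (\sum_(F : {set E} | e \in F) \sum_(k < n)
    pr [set w | Ehat w = F] * (D k * expR (- (k.+1%:R * h * neighbour_mass F)))));
  last first.
  apply: ler_sum => F _; apply: ler_sum => k _; apply: pr_window_event_ge.
  by apply/andP; split; [rewrite mulr_ge0 // ltW | rewrite ler_pM2r // ler_nat].
rewrite exchange_big /=.
apply: (@le_trans _ _ (\sum_(k < n) D k * (expR (- (2 * (k.+1%:R * h))) * x e)));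
  last first.
  apply: ler_sum => k _.
  rewrite [X in _ <= X](_ : _ = D k * \sum_(F : {set E} | e \in F)
      pr [set w | Ehat w = F] * expR (- (k.+1%:R * h * neighbour_mass F))).
    apply: ler_wpM2l; first exact: pr_ge0.
    by apply: expected_exp_neighbour_mass_ge; rewrite mulr_ge0 // ltW.
  by rewrite mulr_sumr; apply: eq_bigr => F _; rewrite mulrCA.
rewrite mulr_sumr le_eqVlt; apply/orP; left; apply/eqP; apply: eq_bigr => k _.
by rewrite /D (pr_Y_grid_window e n h k h0 nh_supp); ring.
Qed.

Lemma riemann_bound_le_ratio (n : nat) (h : R) :
  0 < fine (P [set w | e \in Ehat w]) -> 0 < h ->
  (p e < 1 -> n%:R * h <= support_end (p e)) ->
  riemann_bound (p e) h n <=
    fine (P [set w | safe eu ew (Ehat w) (fun f => Y f w) (fun f => c f w) e])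
    / fine (P [set w | e \in Ehat w]).
Proof.
rewrite Hmarg /= => xe0 h0 nh_supp; rewrite ler_pdivlMr // mulrC.
apply: le_trans (pr_safe_ge _ _ h0 nh_supp); apply: ler_wpM2l; first exact: ltW.
by apply: riemann_bound_le_sum => //; case/andP: (Hp e).
Qed.

End Process.

Theorem lemma2 (R : realType) (V E : finType) (side : V -> bool)
  (eu ew : E -> V)
  (Hbip : forall e, side (eu e) = false /\ side (ew e) = true)
  (Hsimple : forall e f, eu e = eu f -> ew e = ew f -> e = f)
  (p : E -> R) (Hp : forall e, 0 < p e <= 1)
  (t : V -> nat) (x : E -> R)
  (Hx1 : forall v, \sum_(e in delta_v eu ew v) p e * x e <= 1)
  (Hx2 : forall v, \sum_(e in delta_v eu ew v) x e <= (t v)%:R)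
  (Hx3 : forall e, 0 <= x e <= 1)
  (d : measure_display) (Omega : measurableType d) (P : probability Omega R)
  (Ehat : Omega -> {set E}) (Y : E -> Omega -> R) (c : E -> Omega -> bool)
  (HEm : forall F : {set E}, measurable [set w | Ehat w = F])
  (HYm : forall e, measurable_fun setT (Y e))
  (Hcm : forall e b, measurable [set w | c e w = b])
  (Hmarg : forall e, P [set w | e \in Ehat w] = (x e)%:E)
  (Hnc : forall (v : V) (S : {set E}) (b : bool), S \subset delta_v eu ew v ->
     fine (P [set w | forall f, f \in S -> (f \in Ehat w) = b])
       <= \prod_(f in S) fine (P [set w | (f \in Ehat w) = b]))
  (HYdist : forall e (y : R), 0 <= y ->
     (p e < 1 -> y <= (p e)^-1 * ln (1 - p e)^-1) ->
     P [set w | Y e w <= y] = ((p e)^-1 * (1 - expR (- (p e * y))))%:E)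
  (Hc : forall e, P [set w | c e w = true] = (p e)%:E)
  (Hindep : forall (F : {set E}) (B : E -> set R) (b : E -> bool),
     (forall f, measurable (B f)) ->
     P [set w | Ehat w = F /\ (forall f, B f (Y f w)) /\ (forall f, c f w = b f)]
     = (fine (P [set w | Ehat w = F])
        * \prod_f fine (P [set w | B f (Y f w)])
        * \prod_f fine (P [set w | c f w = b f]))%:E)
  (e : E) (He : 0 < fine (P [set w | e \in Ehat w])) :
  g (p e) <=
    fine (P [set w | safe eu ew (Ehat w) (fun f => Y f w) (fun f => c f w) e])
    / fine (P [set w | e \in Ehat w]).
Proof.
apply: g_le_of_riemann_bounds => [|n h h0 nh_supp]; first exact: Hp.
exact: (riemann_bound_le_ratio Hp Hx1 Hx3 HEm HYm Hcm Hmarg Hnc HYdist Hc Hindep).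
Qed.
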